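(* Let $\sigma\in\mathbb{R}^m$ (stresses of the springs, related to elastic elongations by $\sigma=K\varepsilon$ with $K$ positive diagonal) and let $f\in\mathbb{R}^{nd}$ be a stress load. If the lattice with external displacement constraint matrix $R$ is at equilibrium, i.e. \[ \big(-(D_{\xi_0}\varphi)^T\sigma+f\big)^T\delta\zeta=0\quad\text{for all }\delta\zeta\in\mathrm{Ker}\,R, \] then $(D_{\xi_0}\varphi)^T(-\sigma+Hf)\in\mathrm{Im}\,R^T$. Conversely, if $\mathrm{rank}\begin{pmatrix}(D_{\xi_0}\varphi)^T & R^T\end{pmatrix}=nd$, then for any $f\in\mathbb{R}^{nd}$, $(D_{\xi_0}\varphi)^T(-\sigma+Hf)\in\mathrm{Im}\,R^T$ implies that the lattice is at equilibrium.
   Context: $n,m,d,q$ are positive integers. $Q$ is an $n\times m$ matrix with entries in $\{0,1,-1\}$, each column having exactly one $1$ (origin of spring $i$) and one $-1$ (terminus), other entries $0$. $\xi_0\in\mathbb{R}^{nd}$ lists node coordinates ($\xi^0_{d(j-1)+k}$ is the $k$-th coordinate of node $j$), with the endpoints of each spring distinct. $\varphi:\mathbb{R}^{nd}\to\mathbb{R}^m$, $\varphi_i(\xi)=\sqrt{\sum_{k=1}^d(\sum_{j}Q_{ji}\xi_{d(j-1)+k})^2}$, and $D_{\xi_0}\varphi$ is its $m\times nd$ Jacobian at $\xi_0$: $(D_{\xi_0}\varphi)_{i,d(j-1)+k}=\mathcal{D}_{ik}Q_{ji}$ with $\mathcal{D}_{ik}=\frac{1}{\varphi_i(\xi_0)}\sum_{\bar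 j}Q_{\bar ji}\xi^0_{d(\bar j-1)+k}$. The forces exerted by the springs on the nodes are $-(D_{\xi_0}\varphi)^T\sigma\in\mathbb{R}^{nd}$. $R$ is a $q\times nd$ matrix defining the affine kinematic constraint $R(\zeta+\xi_0)+r(t)=0$ on node displacements $\zeta$. The equilibrium condition above is the principle of virtual work for this constraint. $H$ is the $m\times nd$ matrix formed by the first $m$ rows of the Moore–Penrose pseudoinverse $\begin{pmatrix}(D_{\xi_0}\varphi)^T & R^T\end{pmatrix}^+$ (an $(m+q)\times nd$ matrix). *)

From HB Require Import structures.
From mathcomp Require Import all_boot all_order all_algebra.
From mathcomp Require Import reals.
Set Implicit Arguments. Unset Strict Implicit. Unset Printing Implicit Defensive.
Import Order.TTheory GRing.Theory Num.Theory.
Local Open Scope ring_scope.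

Section Lattice.
Variables (R : realType) (n m d : nat).

(* coordinate k of node j of xi (index d*j + k, 0-based) *)
Definition node_coord (xi : 'cV[R]_(n * d)) (j : 'I_n) (k : 'I_d) : R :=
  xi (mxvec_index j k) 0.

Definition incidence_matrix (Q : 'M[R]_(n, m)) : Prop :=
  (forall j i, Q j i = 0 \/ Q j i = 1 \/ Q j i = -1) /\
  (forall i, exists! j, Q j i = 1) /\
  (forall i, exists! j, Q j i = -1).

Definition distinct_endpoints (Q : 'M[R]_(n, m)) (xi0 : 'cV[R]_(n * d)) : Prop :=
  forall (i : 'I_m) (j1 j2 : 'I_n), Q j1 i = 1 -> Q j2 i = -1 ->
    exists k : 'I_d, node_coord xi0 j1 k != node_coord xi0 j2 k.

Definition spring_vec (Q : 'M[R]_(n, m)) (xi : 'cV[R]_(n * d)) (i : 'I_m) (k : 'I_d) : R :=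
  \sum_(j < n) Q j i * node_coord xi j k.

Definition phi (Q : 'M[R]_(n, m)) (xi : 'cV[R]_(n * d)) (i : 'I_m) : R :=
  Num.sqrt (\sum_(k < d) (spring_vec Q xi i k) ^+ 2).

Definition Dcal (Q : 'M[R]_(n, m)) (xi0 : 'cV[R]_(n * d)) (i : 'I_m) (k : 'I_d) : R :=
  spring_vec Q xi0 i k / phi Q xi0 i.

(* Jacobian D_{xi0} phi : m x nd, entry (i, d(j-1)+k) = Dcal_{ik} Q_{ji} *)
Definition Dphi (Q : 'M[R]_(n, m)) (xi0 : 'cV[R]_(n * d)) : 'M[R]_(m, n * d) :=
  \matrix_(i < m) mxvec (\matrix_(j < n, k < d) (Dcal Q xi0 i k * Q j i)).

End Lattice.

(* X is the Moore-Penrose pseudoinverse of A (the four Penrose conditions;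
   over the reals conjugate transpose is transpose). It is unique. *)
Definition MP_pinv (R : realType) (p r : nat) (A : 'M[R]_(p, r)) (X : 'M[R]_(r, p)) : Prop :=
  [/\ A *m X *m A = A, X *m A *m X = X, (A *m X)^T = A *m X & (X *m A)^T = X *m A].

Definition at_equilibrium (R : realType) (m N q : nat) (Dp : 'M[R]_(m, N))
  (Rc : 'M[R]_(q, N)) (sigma : 'cV[R]_m) (f : 'cV[R]_N) : Prop :=
  forall dz : 'cV[R]_N, Rc *m dz = 0 -> (- (Dp^T *m sigma) + f)^T *m dz = 0.

Definition in_image (R : realType) (N q : nat) (M : 'M[R]_(N, q)) (v : 'cV[R]_N) : Prop :=
  exists lam : 'cV[R]_q, v = M *m lam.

(* Write A = [D^T R^T] and split X = [H; G].  Both statements compare the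
   vectors -D^T sigma + f and D^T (-sigma + H f), which differ by
   D^T H f - f = (A X - 1) f - R^T G f.  Whenever A X f = f the
   difference lies in Im R^T, so one vector is in Im R^T iff the other is;
   and Im R^T is exactly the orthogonal of Ker R, which is the equilibrium
   condition.  A X f = f holds for f in Im A because A X A = A, and for every f
   when A has full row rank, since then A X = 1. *)

From HB Require Import structures.
From mathcomp Require Import all_boot all_order all_algebra.
From mathcomp Require Import reals.
Import Order.TTheory GRing.Theory Num.Theory.
Local Open Scope ring_scope.

Section GeneralizedInverse.
Set Implicit Arguments.
Unset Strict Implicit.
Variable F : fieldType.

Lemma orthogonal_kerP (N q : nat) (B : 'M[F]_(q, N)) (v : 'cV[F]_N) :
  (forall z : 'cV_N, B *m z = 0 -> v^T *m z = 0) <->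
  exists lam : 'cV_q, v = B^T *m lam.
Proof.
split=> [perp_v | [lam ->] z Bz0]; last first.
  by rewrite trmx_mul trmxK -mulmxA Bz0 mulmx0.
have coker_v : v^T *m cokermx B = 0.
  apply/matrixP => i j.
  have := perp_v (cokermx B *m delta_mx j 0).
  rewrite mulmxA mulmx_coker mul0mx => /(_ erefl).
  by rewrite mulmxA -colE => /matrixP /(_ i 0); rewrite !mxE.
have /submxP [C vC] : (v^T <= B)%MS by rewrite submxE coker_v.
by exists C^T; rewrite -trmx_mul -vC trmxK.
Qed.

Lemma row_free_ginv (N p : nat) (A : 'M[F]_(N, p)) (X : 'M[F]_(p, N)) :
  row_free A -> A *m X *m A = A -> A *m X = 1%:M.
Proof. by move=> freeA AXA; apply: (row_free_inj freeA); rewrite /= AXA mul1mx. Qed.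

Lemma ginv_usubmx_imageP (N m q : nat) (D : 'M[F]_(N, m)) (B : 'M[F]_(N, q))
    (X : 'M[F]_(m + q, N)) (s : 'cV[F]_m) (f : 'cV[F]_N) :
  row_mx D B *m X *m f = f ->
  (exists lam : 'cV_q, - (D *m s) + f = B *m lam) <->
  (exists lam : 'cV_q, D *m (- s + usubmx X *m f) = B *m lam).
Proof.
rewrite -[X in _ *m X *m _]vsubmxK mul_row_col mulmxDl => AXf.
have shift : - (D *m s) + f = D *m (- s + usubmx X *m f) + B *m (dsubmx X *m f).
  by rewrite mulmxDr mulmxN -addrA !mulmxA AXf.
rewrite shift; split=> [[lam Hlam] | [lam ->]].
  by exists (lam - dsubmx X *m f); rewrite mulmxBr -Hlam addrK.
by exists (lam + dsubmx X *m f); rewrite mulmxDr.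
Qed.

End GeneralizedInverse.

Theorem proposition6 (R : realType) (n m d q : nat)
  (Hn : (0 < n)%N) (Hm : (0 < m)%N) (Hd : (0 < d)%N) (Hq : (0 < q)%N)
  (Q : 'M[R]_(n, m)) (xi0 : 'cV[R]_(n * d)) (Rc : 'M[R]_(q, n * d))
  (HQ : incidence_matrix Q) (Hxi0 : distinct_endpoints Q xi0)
  (X : 'M[R]_(m + q, n * d))
  (HX : MP_pinv (row_mx (Dphi Q xi0)^T Rc^T) X)
  (sigma : 'cV[R]_m) (f : 'cV[R]_(n * d)) :
  let H : 'M[R]_(m, n * d) := usubmx X in
  (at_equilibrium (Dphi Q xi0) Rc sigma f ->
     in_image Rc^T ((Dphi Q xi0)^T *m (- sigma + H *m f))) /\
  (\rank (row_mx (Dphi Q xi0)^T Rc^T) = (n * d)%N ->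
     in_image Rc^T ((Dphi Q xi0)^T *m (- sigma + H *m f)) ->
     at_equilibrium (Dphi Q xi0) Rc sigma f).
Proof.
move=> H; case: HX => AXA _ _ _.
rewrite /at_equilibrium /in_image.
split=> [/orthogonal_kerP [lam Hlam] | rankA im_shift].
  apply/(ginv_usubmx_imageP (X := X) _ _); last by exists lam.
  have -> : f = row_mx (Dphi Q xi0)^T Rc^T *m col_mx sigma lam.
    by rewrite mul_row_col -Hlam addNKr.
  by rewrite mulmxA AXA.
apply/orthogonal_kerP/(ginv_usubmx_imageP (X := X) _ _) => //.
by rewrite (row_free_ginv _ AXA) ?mul1mx // /row_free rankA.
Qed.
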